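(* Let $A\in\mathrm{Sym}(\mathbb R^{n+1})$ with $\vec a_0\ne 0$, and let $B=I_n+\sqrt{-1}A$ (which is invertible). Then $\mathrm{Re}(B^{-1})$ is positive semidefinite with exactly one zero eigenvalue, and its null space is spanned by the first column $(a_{00},a_{01},\dots,a_{0n})^T$ of $A$.
   Context: $I_n=\mathrm{diag}(0,1,\dots,1)\in\mathrm{Sym}(\mathbb R^{n+1})$. For $A=[a_{ij}]_{i,j=0}^n$, $\vec a_0=(a_{01},\dots,a_{0n})$. For a complex matrix $M$, $\mathrm{Re}\,M$ denotes the entrywise real part. *)

(* Complex numbers: an arbitrary numClosedFieldType C
   (e.g. algC); real numbers are its elements x with x \is Num.real. *)
From HB Require Import structures.
From mathcomp Require Import all_boot all_order all_algebra.
Set Implicit Arguments. Unset Strict Implicit. Unset Printing Implicit Defensive.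
Import Order.TTheory GRing.Theory Num.Theory.
Local Open Scope ring_scope.

Notation realmx := (mxOver Num.real).

(* I_n = diag(0,1,...,1) of size n+1 *)
Definition Imx0 (C : numClosedFieldType) (n : nat) : 'M[C]_(n.+1) :=
  \matrix_(i, j) (((i == j) && (i != ord0))%:R).

Definition Remx (C : numClosedFieldType) m n (M : 'M[C]_(m, n)) : 'M[C]_(m, n) :=
  map_mx (fun z : C => 'Re z) M.

Definition avec0 (C : numClosedFieldType) (n : nat) (A : 'M[C]_(n.+1)) : 'rV[C]_n :=
  \row_(j < n) A ord0 (lift ord0 j).

Definition psd (C : numClosedFieldType) (n : nat) (M : 'M[C]_n) : Prop :=
  forall x : 'cV[C]_n, x \is a realmx -> 0 <= (x^T *m M *m x) 0 0.

(* Write a for the first column of A and e0 for the first basis vector.  As A is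
   real symmetric, w^* A w is real for every complex w, so
   Re (w^* B w) = |I_n w|^2.  If B w = 0 this forces I_n w = 0, i.e. w = w_0 e0,
   and then 0 = B w = i w_0 a: B is invertible.  For real x put w = B^-1 x; then
   x^T Re(B^-1) x = Re (x^* B^-1 x) = Re (w^* B^* w) = |I_n w|^2 >= 0, with
   equality iff w = w_0 e0, i.e. iff x is a real multiple of a = -i B e0.
   Finally Re(B^-1) is real symmetric, hence unitarily diagonalizable, so the
   multiplicity of its eigenvalue 0 is the dimension of its complex kernel,
   which is spanned by a. *)

From HB Require Import structures.
From mathcomp Require Import all_boot all_order all_algebra.
From mathcomp Require Import sesquilinear spectral.
Import Order.TTheory GRing.Theory Num.Theory.
Local Open Scope ring_scope.
Local Open Scope sesquilinear_scope.

Lemma inj_unitmx {F : fieldType} {n} (K : 'M[F]_n) :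
  (forall w : 'cV_n, K *m w = 0 -> w = 0) -> K \in unitmx.
Proof.
move=> Kinj; rewrite -unitmx_tr -row_free_unit; apply: inj_row_free => v.
move=> /(congr1 trmx); rewrite trmx_mul trmxK trmx0 => /Kinj.
by move=> /(congr1 trmx); rewrite trmxK trmx0.
Qed.

Lemma char_poly_similar {R : comUnitRingType} {n} (S K : 'M[R]_n) :
  S \in unitmx -> char_poly (invmx S *m K *m S) = char_poly K.
Proof.
move=> Su; rewrite /char_poly /char_poly_mx.
set f := map_mx (@polyC R).
have fK : f (invmx S) *m f S = 1%:M by rewrite -map_mxM mulVmx // map_mx1.
have -> : 'X%:M - f (invmx S *m K *m S) = f (invmx S) *m ('X%:M - f K) *m f S.
  rewrite mulmxBr mulmxBl -[f (invmx S) *m 'X%:M *m f S]mulmxA -scalar_mxC.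
  by rewrite mulmxA fK mul1mx /f !map_mxM.
by rewrite !det_mulmx mulrAC -det_mulmx fK det1 mul1r.
Qed.

Lemma mup_char_poly_diag {F : fieldType} {n} (d : 'rV[F]_n) x i0 :
  d 0 i0 = x -> (forall j, d 0 j = x -> j = i0) ->
  mup x (char_poly (diag_mx d)) = 1%N.
Proof.
move=> di0 dj; rewrite char_poly_trig ?diag_mx_is_trig // (bigD1 i0) //= mupMl.
  by rewrite mxE eqxx mulr1n di0 -[X in mup _ X]expr1 mup_XsubCX eqxx.
rewrite /root horner_prod; apply/prodf_neq0 => j ji0.
rewrite hornerXsubC mxE eqxx mulr1n subr_eq0; apply: contra ji0 => /eqP dx.
by rewrite (dj _ (esym dx)).
Qed.

Lemma mul_diag_mx_delta {R : pzSemiRingType} {n} (d : 'rV[R]_n) j :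
  diag_mx d *m delta_mx j 0 = d 0 j *: (delta_mx j 0 : 'cV_n).
Proof.
apply/matrixP => i k; rewrite mul_diag_mx !mxE.
by case: (i =P j) => [->|]; rewrite ?mulr0.
Qed.

Lemma mup_char_poly_normalmx {C : numClosedFieldType} {n} (M : 'M[C]_n)
    (a : 'cV_n) x :
  M \is normalmx -> a != 0 -> M *m a = x *: a ->
  (forall w, M *m w = x *: w -> exists c, w = c *: a) ->
  mup x (char_poly M) = 1%N.
Proof.
move=> /orthomx_spectralP; set S := spectralmx M; set D := spectral_diag M.
move=> ME a0 Ma Meigen; have Su : S \in unitmx by apply: spectral_unit.
set u := S *m a.
have [i0 ui0] : exists i0, u i0 0 != 0.
  apply/existsP; apply: contraR a0 => /existsPn u0; apply/eqP.
  have u_eq0 : u = 0.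
    by apply/matrixP => i j; rewrite ord1 [RHS]mxE; apply/eqP/negPn/u0.
  by rewrite -(mulKmx Su a) -/u u_eq0 mulmx0.
have SM : S *m M = diag_mx D *m S by rewrite ME !mulmxA mulmxV // mul1mx.
have Du : diag_mx D *m u = x *: u by rewrite mulmxA -SM -mulmxA Ma scalemxAr.
have Di0 : D 0 i0 = x.
  by apply: (mulIf ui0); move/matrixP/(_ i0 0): Du; rewrite mul_diag_mx !mxE.
rewrite ME char_poly_similar //; apply: (mup_char_poly_diag _ _ _ Di0) => j Dj.
have [c ej] : exists c, invmx S *m delta_mx j 0 = c *: a.
  apply: Meigen; rewrite ME -!mulmxA mulKVmx //.
  by rewrite mul_diag_mx_delta Dj scalemxAr.
have {}ej : delta_mx j 0 = c *: u by rewrite /u scalemxAr -ej mulKVmx.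
apply/eqP; apply: contraT => ji0.
have /matrixP/(_ i0 0) := ej; rewrite [LHS]mxE [RHS]mxE eq_sym (negPf ji0).
move=> /esym/eqP; rewrite mulf_eq0 (negPf ui0) orbF => /eqP c0.
move/matrixP/(_ j 0): ej; rewrite c0 scale0r !mxE !eqxx => /eqP.
by rewrite oner_eq0.
Qed.

Section ComplexForms.
Context {C : numClosedFieldType}.

Lemma qf_trC {m} (K : 'M[C]_m) (w : 'cV_m) :
  (w^t* *m K^t* *m w) 0 0 = ((w^t* *m K *m w) 0 0)^*.
Proof.
have -> : ((w^t* *m K *m w) 0 0)^* = ((w^t* *m K *m w)^t*) 0 0 by rewrite !mxE.
by rewrite !trmx_mul !map_mxM trmxCK mulmxA.
Qed.

Lemma qf_hermitian_real {m} (K : 'M[C]_m) (w : 'cV_m) :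
  K^t* = K -> (w^t* *m K *m w) 0 0 \is Num.real.
Proof. by move=> Kh; apply/CrealP; rewrite -qf_trC Kh. Qed.

Lemma trCmx_mul_ge0 {m} (y : 'cV[C]_m) : 0 <= (y^t* *m y) 0 0.
Proof.
by rewrite mxE sumr_ge0 // => i _; rewrite !mxE mulrC mul_conjC_ge0.
Qed.

Lemma trCmx_mul_eq0 {m} (y : 'cV[C]_m) : (y^t* *m y) 0 0 = 0 -> y = 0.
Proof.
rewrite mxE => /psumr_eq0P y0; apply/matrixP => i j; rewrite ord1 mxE.
apply/eqP; rewrite -mul_conjC_eq0 mulrC; apply/eqP.
have := y0 _ i isT; rewrite !mxE; apply=> k _.
by rewrite !mxE mulrC mul_conjC_ge0.
Qed.

Lemma trCmx_real {m n} (M : 'M[C]_(m, n)) : M \is a realmx -> M^t* = M^T.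
Proof.
by move=> /mxOverP Mr; apply/matrixP => i j; rewrite !mxE; apply/CrealP.
Qed.

Lemma Remx_qf_real {m} (N : 'M[C]_m) (x : 'cV_m) : x \is a realmx ->
  (x^T *m Remx N *m x) 0 0 = 'Re ((x^t* *m N *m x) 0 0).
Proof.
move=> /[dup] xr /mxOverP xr'; rewrite trCmx_real // !mxE raddf_sum /=.
apply: eq_bigr => j _; rewrite ReMr ?xr' // !mxE raddf_sum /=; congr (_ * _).
by apply: eq_bigr => i _; rewrite !mxE ReMl ?xr'.
Qed.

Lemma Remx_scale_real {m n} (c : C) (a : 'M[C]_(m, n)) : a \is a realmx ->
  Remx (c *: a) = 'Re c *: a.
Proof.
by move=> /mxOverP ar; apply/matrixP => i j; rewrite !mxE ReMr ?ar.
Qed.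

Lemma Remx_real {m n} (M : 'M[C]_(m, n)) : Remx M \is a realmx.
Proof. by apply/mxOverP => i j; rewrite mxE Creal_Re. Qed.

Lemma Remx_id_real {m n} (M : 'M[C]_(m, n)) : M \is a realmx -> Remx M = M.
Proof.
by move=> /mxOverP Mr; apply/matrixP => i j; rewrite mxE; apply/Creal_ReP.
Qed.

Lemma Remx_mulmx_real {m n p} (N : 'M[C]_(m, n)) (a : 'M[C]_(n, p)) :
  a \is a realmx -> Remx N *m a = Remx (N *m a).
Proof.
move=> /mxOverP ar; apply/matrixP => i j; rewrite !mxE raddf_sum /=.
by apply: eq_bigr => k _; rewrite !mxE ReMr ?ar.
Qed.

Lemma realmx_ker_span {m} (K : 'M[C]_m) (a : 'cV_m) : K \is a realmx ->
  (forall v, v \is a realmx -> K *m v = 0 -> exists c, v = c *: a) ->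
  forall w, K *m w = 0 -> exists c, w = c *: a.
Proof.
move=> Kr Kker w Kw; set x := Remx w; set y := map_mx (fun z => 'Im z) w.
have wE : w = x + 'i *: y by apply/matrixP => i j; rewrite !mxE -Crect.
have xr : x \is a realmx by apply: Remx_real.
have yr : y \is a realmx by apply/mxOverP => i j; rewrite mxE Creal_Im.
rewrite wE; have /pair_equal_spec[/(Kker _ xr)[c1 ->] /(Kker _ yr)[c2 ->]] :
    (K *m x, K *m y) = (0, 0).
  apply: eqmx_ReiIm; rewrite ?mxOverM ?mxOver0 ?rpred0 //.
  by rewrite scalemxAr -mulmxDr -wE Kw scaler0 addr0.
by exists (c1 + 'i * c2); rewrite scalerA scalerDl.
Qed.

End ComplexForms.

Section Imx0.
Context {C : numClosedFieldType} {n : nat}.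
Local Notation I0 := (Imx0 C n).
Local Notation e0 := (delta_mx ord0 0 : 'cV[C]_n.+1).

Lemma Imx0E : I0 = 1%:M - delta_mx ord0 ord0.
Proof.
apply/matrixP=> i j; rewrite !mxE.
case: (i =P ord0) => [->|/eqP i0]; case: (j =P ord0) => [->|/eqP j0];
  rewrite /= ?eqxx ?andbF ?andbT ?subrr ?subr0 //.
by rewrite eq_sym (negPf j0).
Qed.

Lemma Imx0_real : I0 \is a realmx.
Proof. by apply/mxOverP => i j; rewrite mxE realn. Qed.

Lemma trmx_Imx0 : I0^T = I0.
Proof. by rewrite Imx0E linearB /= trmx1 trmx_delta. Qed.

Lemma trCmx_Imx0 : I0^t* = I0.
Proof. by rewrite trCmx_real ?Imx0_real ?trmx_Imx0. Qed.

Lemma delta_real (i : 'I_n.+1) (j : 'I_1) :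
  (delta_mx i j : 'cV[C]_n.+1) \is a realmx.
Proof. by apply/mxOverP => k l; rewrite mxE realn. Qed.

Lemma Imx0_idem : I0 *m I0 = I0.
Proof.
by rewrite Imx0E mulmxBl !mulmxBr !mul1mx mulmx1 mul_delta_mx subrr subr0.
Qed.

Lemma Imx0_e0 : I0 *m e0 = 0.
Proof. by rewrite Imx0E mulmxBl mul1mx mul_delta_mx subrr. Qed.

Lemma Imx0_ker (w : 'cV_n.+1) : I0 *m w = 0 -> w = w ord0 0 *: e0.
Proof.
rewrite Imx0E mulmxBl mul1mx -(mul_delta_mx (0 : 'I_1)) -mulmxA -rowE.
by rewrite [row _ _]mx11_scalar mul_mx_scalar mxE => /subr0_eq.
Qed.

Lemma qf_Imx0 (w : 'cV_n.+1) :
  (w^t* *m I0 *m w) 0 0 = ((I0 *m w)^t* *m (I0 *m w)) 0 0.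
Proof. by rewrite trmx_mul map_mxM trCmx_Imx0 -{1}Imx0_idem !mulmxA. Qed.

End Imx0.

Lemma col0_neq0 {C : numClosedFieldType} {n} (A : 'M[C]_n.+1) :
  A^T = A -> avec0 A != 0 -> col ord0 A != 0.
Proof.
move=> Asym; apply: contra_neq => a0; apply/rowP => j; rewrite !mxE -Asym mxE.
by have /matrixP/(_ (lift ord0 j) 0) := a0; rewrite !mxE.
Qed.

Section PerturbedProjection.
Context {C : numClosedFieldType} {n : nat} {A : 'M[C]_n.+1}.
Hypotheses (Areal : A \is a realmx) (Asym : A^T = A).
Local Notation I0 := (Imx0 C n).
Local Notation e0 := (delta_mx ord0 0 : 'cV[C]_n.+1).
Local Notation a := (col ord0 A).
Local Notation B := (I0 + 'i *: A).

Lemma col0_real : a \is a realmx.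
Proof. by apply/mxOverP => i j; rewrite mxE (mxOverP Areal). Qed.

Lemma trmx_B : B^T = B.
Proof. by rewrite linearD /= trmx_Imx0 linearZ /= Asym. Qed.

Lemma trCmx_A : A^t* = A.
Proof. by rewrite trCmx_real. Qed.

Lemma Re_qfB (w : 'cV_n.+1) :
  'Re ((w^t* *m B *m w) 0 0) = ((I0 *m w)^t* *m (I0 *m w)) 0 0.
Proof.
rewrite mulmxDr mulmxDl -scalemxAr -scalemxAl mxE [X in _ + X]mxE.
by rewrite Re_rect ?qf_hermitian_real ?trCmx_Imx0 ?trCmx_A // qf_Imx0.
Qed.

Lemma Re_qfB_ge0 (w : 'cV_n.+1) : 0 <= 'Re ((w^t* *m B *m w) 0 0).
Proof. by rewrite Re_qfB trCmx_mul_ge0. Qed.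

Lemma Re_qfB_eq0 (w : 'cV_n.+1) :
  'Re ((w^t* *m B *m w) 0 0) = 0 -> w = w ord0 0 *: e0.
Proof. by rewrite Re_qfB => /trCmx_mul_eq0; apply: Imx0_ker. Qed.

Lemma mulmxB_e0 : B *m e0 = 'i *: a.
Proof. by rewrite mulmxDl Imx0_e0 add0r -scalemxAl colE. Qed.

Lemma Remx_invB_qf (x : 'cV_n.+1) : B \in unitmx -> x \is a realmx ->
  (x^T *m Remx (invmx B) *m x) 0 0 =
  'Re (((invmx B *m x)^t* *m B *m (invmx B *m x)) 0 0).
Proof.
move=> Bu xr; rewrite Remx_qf_real // -[in RHS]Re_conj -qf_trC -mulmxA.
by rewrite -map_mxM -trmx_mul mulKVmx.
Qed.

Hypothesis a0 : a != 0.

Lemma unitmx_B : B \in unitmx.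
Proof.
apply: inj_unitmx => w Bw.
have /Re_qfB_eq0 wE : 'Re ((w^t* *m B *m w) 0 0) = 0.
  by rewrite -mulmxA Bw mulmx0 mxE raddf0.
move: Bw; rewrite wE -scalemxAr mulmxB_e0 scalerA => /eqP.
rewrite scaler_eq0 (negPf a0) orbF mulf_eq0 (negPf (neq0Ci C)) orbF => /eqP->.
by rewrite scale0r.
Qed.

Local Notation M := (Remx (invmx B)).

Lemma psd_Remx_invB : psd M.
Proof. by move=> x xr; rewrite Remx_invB_qf ?unitmx_B // Re_qfB_ge0. Qed.

Lemma trmx_Remx_invB : M^T = M.
Proof. by rewrite /Remx map_trmx trmx_inv trmx_B. Qed.

Lemma Remx_invB_col0 : M *m a = 0.
Proof.
have aE : a = - 'i *: (B *m e0).
  by rewrite mulmxB_e0 scalerA mulNr -expr2 sqrCi opprK scale1r.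
rewrite Remx_mulmx_real ?col0_real // aE -scalemxAr mulKmx ?unitmx_B //.
by rewrite Remx_scale_real ?delta_real // raddfN /= Re_i oppr0 scale0r.
Qed.

Lemma Remx_invB_ker (v : 'cV_n.+1) : v \is a realmx -> M *m v = 0 ->
  exists2 c, c \is Num.real & v = c *: a.
Proof.
move=> vr Mv; set w := invmx B *m v.
have /Re_qfB_eq0 wE : 'Re ((w^t* *m B *m w) 0 0) = 0.
  by rewrite -Remx_invB_qf ?unitmx_B // -mulmxA Mv mulmx0 mxE.
exists ('Re ('i * w ord0 0)); first exact: Creal_Re.
rewrite -[LHS]Remx_id_real // -(mulKVmx unitmx_B v) -/w {1}wE -scalemxAr.
by rewrite mulmxB_e0 scalerA mulrC Remx_scale_real ?col0_real.
Qed.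

End PerturbedProjection.

Theorem lemma4p3 (C : numClosedFieldType) (n : nat) (A : 'M[C]_(n.+1))
  (hAreal : A \is a realmx) (hAsym : A^T = A) (ha0 : avec0 A != 0) :
  let B := Imx0 C n + 'i *: A in
  let M := Remx (invmx B) in
  [/\ B \in unitmx,
      psd M,
      mup 0 (char_poly M) = 1%N
    & forall v : 'cV[C]_(n.+1), v \is a realmx ->
        (M *m v = 0 <-> exists2 c : C, c \is Num.real & v = c *: col ord0 A)].
Proof.
move=> B M; have a0 := col0_neq0 A hAsym ha0.
have Mreal : M \is a realmx := Remx_real _.
have Ma : M *m col ord0 A = 0 := Remx_invB_col0 hAreal hAsym a0.
have Mker := Remx_invB_ker hAreal hAsym a0.
split; first exact: unitmx_B; first exact: psd_Remx_invB.
  apply: (mup_char_poly_normalmx _ _ _ _ a0); rewrite ?Ma ?scale0r //.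
    apply: symmetric_normalmx Mreal; apply/is_hermitianmxP.
    by rewrite expr0 scale1r map_mx_id // trmx_Remx_invB.
  move=> w; rewrite scale0r; apply: realmx_ker_span Mreal _ w => v vr.
  by case/(Mker v vr) => c _ ->; exists c.
move=> v vr; split; first exact: Mker.
by case=> c _ ->; rewrite -scalemxAr Ma scaler0.
Qed.
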